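(* Fix a rooted phylogenetic tree $T$ with root $\rho$, leaf set $[n]$, and edge set $E$. Let $\mathcal{G}_T=\{PD_{T,l}: l\in\mathbb{R}_{\ge 0}^E\}$ be the class of cooperative games on the player set $[n]$ induced by $T$ with non-negative edge lengths. This class is closed under addition, since $PD_{T,l_1}+PD_{T,l_2}=PD_{T,l_1+l_2}$. A value on $\mathcal{G}_T$ is a map $\psi$ assigning to each $\nu\in\mathcal{G}_T$ a function $\psi_\nu:[n]\to\mathbb{R}$. Consider the following axioms: 1. Efficiency: $\sum_{i\in[n]}\psi_\nu(i)=\nu([n])$. 2. Symmetry: if $i\ne j$ and $\nu(C\cup\{i\})=\nu(C\cup\{j\})$ for all $C\subseteq[n]\setminus\{i,j\}$, then $\psi_\nu(i)=\psi_\nu(j)$. 3. Dummy: if $\nu(C\cup\{i\})=\nu(C)$ for all $C\subseteq[n]\setminus\{i\}$, then $\psi_\nu(i)=0$. 4. Additivity: $\psi_{\nu_1+\nu_2}(i)=\psi_{\nu_1}(i)+\psi_{\nu_2}(i)$ for all $\nu_1,\nu_2\in\mathcal{G}_T$ and all $i$. Then there is exactly one value $\psi$ on $\mathcal{G}_T$ satisfying Axioms 1–4, and it is the Shapley value: $$\psi_\nu(i)=\frac{1}{n!}\sum_{S\subseteq[n]:\,i\in S}(|S|-1)!\,(n-|S|)!\,\big(\nu(S)-\nu(S\setminus\{i\})\big).$$ Equivalently, for $\nu=PD_{T,l}$, $\psi_\nu(i)=\sum_{e\in P(T;\rho,i)} l(e)/n(e)$ (the Fair Proportion index).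
   Context: A rooted phylogenetic tree on $[n]$ is a rooted tree with leaf set $[n]$ whose non-leaf vertices are unlabelled and have out-degree at least 2. For edge lengths $l\ge 0$ and $S\subseteq[n]$, the phylogenetic diversity $PD_{T,l}(S)$ is the sum of the lengths of the edges of the minimal subtree of $T$ containing $S\cup\{\rho\}$, with $PD_{T,l}(\emptyset)=0$. $n(e)$ is the number of leaves descended from edge $e$, and $P(T;\rho,i)$ is the path from $\rho$ to leaf $i$. *)

From HB Require Import structures.
From mathcomp Require Import all_boot all_order all_algebra.
Set Implicit Arguments. Unset Strict Implicit. Unset Printing Implicit Defensive.
Import Order.TTheory GRing.Theory Num.Theory.
Local Open Scope ring_scope.

(* A rooted tree on the finite vertex type V is given by a root [rho] and a
   parent map [par] (with [par rho = rho]); the edges are the pairs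
   (v, par v) for v != rho, so an edge is identified with its lower endpoint v.
   [anc v w] : w is an ancestor of v or w = v (iterate par from v to reach w). *)
Definition anc (V : finType) (par : V -> V) (v w : V) : bool :=
  connect (frel par) v w.

Definition children (V : finType) (rho : V) (par : V -> V) (v : V) : {set V} :=
  [set w | (w != rho) && (par w == v)].

Definition is_rooted_phylo (n : nat) (V : finType) (rho : V) (par : V -> V)
    (leaf : 'I_n -> V) : Prop :=
  [/\ par rho = rho,
      forall v, anc par v rho,
      injective leaf,
      forall v, v \in codom leaf -> children rho par v = set0
    & forall v, v \notin codom leaf -> 2 <= #|children rho par v|]%N.

Definition game (R : Type) (n : nat) := {ffun {set 'I_n} -> R}.

(* Phylogenetic diversity: the minimal subtree containing S and rho is the union
   of the root-to-leaf paths of the leaves in S, so edge v is in it iff v is an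
   ancestor-or-self of some leaf of S. *)
Definition PD (R : numDomainType) (n : nat) (V : finType) (rho : V) (par : V -> V)
    (leaf : 'I_n -> V) (l : V -> R) : game R n :=
  [ffun S : {set 'I_n} =>
     \sum_(v | (v != rho) && [exists i in S, anc par (leaf i) v]) l v].

Definition n_e (n : nat) (V : finType) (par : V -> V) (leaf : 'I_n -> V) (v : V)
  : nat := #|[set i | anc par (leaf i) v]|.

Definition FP (R : numFieldType) (n : nat) (V : finType) (rho : V) (par : V -> V)
    (leaf : 'I_n -> V) (l : V -> R) (i : 'I_n) : R :=
  \sum_(v | (v != rho) && anc par (leaf i) v) l v / (n_e par leaf v)%:R.

Definition shapley (R : numFieldType) (n : nat) (nu : game R n) (i : 'I_n) : R :=
  (n`!%:R)^-1 * \sum_(S : {set 'I_n} | i \in S)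
     ((#|S|.-1)`! * (n - #|S|)`!)%:R * (nu S - nu (S :\ i)).

Definition nonneg_len (R : numDomainType) (V : finType) (rho : V) (l : V -> R) :=
  forall v, v != rho -> 0 <= l v.

(* A value on G_T is modelled as a map psi on all games; only its restriction
   to G_T = { PD l | l >= 0 } matters. *)
Definition value_axioms (R : numFieldType) (n : nat) (V : finType) (rho : V)
    (par : V -> V) (leaf : 'I_n -> V) (psi : game R n -> 'I_n -> R) : Prop :=
  [/\
      forall l, nonneg_len rho l ->
        \sum_(i < n) psi (PD rho par leaf l) i = PD rho par leaf l setT,
      forall l, nonneg_len rho l -> forall i j : 'I_n, i != j ->
        (forall C : {set 'I_n}, i \notin C -> j \notin C ->
           PD rho par leaf l (i |: C) = PD rho par leaf l (j |: C)) ->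
        psi (PD rho par leaf l) i = psi (PD rho par leaf l) j,
      forall l, nonneg_len rho l -> forall i : 'I_n,
        (forall C : {set 'I_n}, i \notin C ->
           PD rho par leaf l (i |: C) = PD rho par leaf l C) ->
        psi (PD rho par leaf l) i = 0
    &
      forall l1 l2, nonneg_len rho l1 -> nonneg_len rho l2 -> forall i : 'I_n,
        psi [ffun S => PD rho par leaf l1 S + PD rho par leaf l2 S] i =
        psi (PD rho par leaf l1) i + psi (PD rho par leaf l2) i].

From HB Require Import structures.
From mathcomp Require Import all_boot all_order all_algebra.
From mathcomp Require Import fingroup perm ring.
Set Implicit Arguments. Unset Strict Implicit. Unset Printing Implicit Defensive.
Import Order.TTheory GRing.Theory Num.Theory.
Local Open Scope ring_scope.

(* Efficiency is a double-counting
   argument: after multiplying by n!, the marginal contributions regroup into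
   \sum_S (|S| w_|S| - (n - |S|) w_(|S|+1)) nu S, whose coefficients telescope
   to n! on S = [n], -n! on S = {} and 0 elsewhere (shapley_weight_telescope).

   Part 2 (phylogenetic games): PD is additive in the edge lengths, so PD l is
   the sum of the single-edge games PD (edge_len l v).  In the game of edge v
   the leaves below v are pairwise symmetric and all other leaves are dummies,
   so any value satisfying the four axioms gives l v / n(v) to each leaf below
   v (value_edge).  Additivity then forces every such value to equal the Fair
   Proportion index (value_FP). *)

Section ShapleyProperties.
Variables (R : numFieldType) (n : nat).
Implicit Types (nu : game R n) (S C : {set 'I_n}) (i j : 'I_n).

Lemma shapley_dummy nu i :
  (forall C, i \notin C -> nu (i |: C) = nu C) -> shapley nu i = 0.
Proof.
move=> dummy; rewrite /shapley big1 ?mulr0 // => S iS.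
by rewrite -[in nu S](setD1K iS) dummy ?setD11 // subrr mulr0.
Qed.

Lemma shapley_add nu1 nu2 i :
  shapley [ffun S => nu1 S + nu2 S] i = shapley nu1 i + shapley nu2 i.
Proof.
rewrite /shapley -mulrDr -big_split /=; congr (_ * _); apply: eq_bigr => S _.
by rewrite !ffunE -mulrDr addrACA opprD.
Qed.

Definition swap_set i j S := tperm i j @^-1: S.

Lemma swap_setK i j : involutive (swap_set i j).
Proof. by move=> S; apply/setP=> x; rewrite !inE tpermK. Qed.

Lemma card_swap_set i j S : #|swap_set i j S| = #|S|.
Proof. exact/card_preimset/perm_inj. Qed.

Lemma swap_set_invariant nu i j :
  (forall C, i \notin C -> j \notin C -> nu (i |: C) = nu (j |: C)) ->
  forall S, nu (swap_set i j S) = nu S.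
Proof.
move=> symm S; have [->|ij] := eqVneq i j.
  by congr (nu _); apply/setP=> x; rewrite !inE tperm1 perm1.
have swapE : swap_set i j S =
    if (i \in S) == (j \in S) then S
    else if i \in S then j |: (S :\ i) else i |: (S :\ j).
  apply/setP=> x; rewrite inE.
  case: tpermP => [->|->|/eqP xi /eqP xj]; case iS: (i \in S); case jS: (j \in S);
    rewrite /= ?inE ?eqxx ?iS ?jS ?(negPf ij) 1?eq_sym ?(negPf ij) //=;
    by rewrite ?(eq_sym j) ?(eq_sym i) ?(negPf xi) ?(negPf xj).
rewrite swapE; case iS: (i \in S); case jS: (j \in S) => //=.
  by rewrite -symm ?setD1K // !inE ?eqxx ?jS ?andbF.
by rewrite symm ?setD1K // !inE ?eqxx ?iS ?andbF.
Qed.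

(* Symmetric players receive the same Shapley value: reindex the coalitions
   containing j by the transposition (i j). *)
Lemma shapley_sym nu i j :
  (forall C, i \notin C -> j \notin C -> nu (i |: C) = nu (j |: C)) ->
  shapley nu i = shapley nu j.
Proof.
move=> symm; rewrite /shapley (reindex_inj (can_inj (swap_setK i j))) /=.
congr (_ * _); apply: eq_big => [S|S jS]; first by rewrite inE tpermL.
have -> : swap_set i j S :\ i = swap_set i j (S :\ j).
  by apply/setP=> x; rewrite !inE -[x == i](inj_eq (@perm_inj _ (tperm i j))) tpermL.
by rewrite card_swap_set !swap_set_invariant.
Qed.

(* n! times the Shapley weight of a coalition of size k. *)
Definition shapley_weight (k : nat) : R := ((k.-1)`! * (n - k)`!)%:R.

(* The combinatorial identity behind efficiency, in nat (no subtraction of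
   weights): k w_k + [k = 0] n! = (n - k) w_(k+1) + [k = n] n!. *)
Lemma weight_balance (k : nat) : (0 < n)%N -> (k <= n)%N ->
  (k * ((k.-1)`! * (n - k)`!) + (k == 0%N) * n`! =
   (n - k) * (k`! * (n - k.+1)`!) + (k == n) * n`!)%N.
Proof.
case: n => // m _; case: k => [|k] k_le_n.
  by rewrite /= subn0 subn1 /= factS fact0 !mul0n !mul1n addn0.
have [-> | k_ne_m] := eqVneq k m.
  by rewrite subnn /= eqxx factS fact0 muln1 !mul0n /= mul1n addn0 add0n.
have : (k < m)%N by rewrite ltn_neqAle k_ne_m.
rewrite -subn_gt0; case def_d: (m - k)%N => [|d] //= _.
rewrite !subSS subnS def_d /= !factS eqSS (negPf k_ne_m) !mul0n !addn0; ring.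
Qed.

(* The coefficient of nu S in n! times the total Shapley value. *)
Lemma shapley_weight_telescope (k : nat) : (0 < n)%N -> (k <= n)%N ->
  k%:R * shapley_weight k - (n - k)%:R * shapley_weight k.+1 =
  ((k == n)%:R - (k == 0%N)%:R) * n`!%:R.
Proof.
move=> n_gt0 k_le_n; have := congr1 (fun m => m%:R : R) (weight_balance n_gt0 k_le_n).
rewrite /shapley_weight /= !natrD !natrM => /(canRL (addrK _)) ->; ring.
Qed.

Lemma sum_players_count (P : 'I_n -> pred {set 'I_n}) (G : {set 'I_n} -> R) :
  \sum_(i < n) \sum_(S | P i S) G S = \sum_S #|[set i | P i S]|%:R * G S.
Proof.
rewrite (exchange_big_dep xpredT) //=; apply: eq_bigr => S _.
by rewrite sumr_const mulr_natl; congr (_ *+ _); apply: eq_card => i; rewrite inE.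
Qed.

Lemma shapley_split nu i : n`!%:R * shapley nu i =
  \sum_(S : {set 'I_n} | i \in S) shapley_weight #|S| * nu S -
  \sum_(S : {set 'I_n} | i \notin S) shapley_weight #|S|.+1 * nu S.
Proof.
rewrite /shapley mulVKf ?pnatr_eq0 -?lt0n ?fact_gt0 //.
under eq_bigr do rewrite mulrBr; rewrite sumrB; congr (_ - _).
rewrite (reindex_onto (fun T => i |: T) (fun S : {set 'I_n} => S :\ i)) /=; last first.
  by move=> S iS; rewrite setD1K.
apply: eq_big => [T|T /andP[_ /eqP T_eq]].
  rewrite setU11 /=; apply/eqP/idP => [<-|iT]; first by rewrite setD11.
  by rewrite setU1K.
have iT : i \notin T by rewrite -T_eq setD11.
by rewrite T_eq /shapley_weight cardsU1 iT.
Qed.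

Lemma shapley_eff nu : \sum_(i < n) shapley nu i = nu setT - nu set0.
Proof.
have [n0|n_gt0] := posnP n.
  have T0 : [set: 'I_n] = set0 by apply/setP => -[x]; rewrite n0.
  by rewrite T0 subrr big1 // => i; have := ltn_ord i; rewrite {2}n0.
have card_le S : (#|S| <= n)%N by rewrite -[X in (_ <= X)%N]card_ord max_card.
have cardS_n S : (#|S| == n) = (S == setT).
  by rewrite eqEcard subsetT cardsT card_ord eqn_leq card_le.
apply: (@mulfI _ (n`!%:R)); first by rewrite pnatr_eq0 -lt0n fact_gt0.
rewrite mulr_sumr; under eq_bigr do rewrite shapley_split.
rewrite sumrB !sum_players_count -sumrB.
under eq_bigr => S _.
  have -> : [set i | i \notin S] = ~: S by apply/setP => x; rewrite !inE.
  rewrite [#|~: S|]cardsCs setCK card_ord.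
  have -> : [set i | i \in S] = S by apply/setP => x; rewrite inE.
  rewrite !mulrA -mulrBl shapley_weight_telescope // cardS_n cards_eq0.
  over.
rewrite (eq_bigr (fun S => (if S == setT then n`!%:R * nu S else 0) -
                          (if S == set0 then n`!%:R * nu S else 0))); last first.
  by move=> S _; rewrite -mulrA mulrBl !mulr_natl !mulrb.
by rewrite sumrB -!big_mkcond /= !big_pred1_eq mulrBr.
Qed.
End ShapleyProperties.

Lemma existsU1 (T : finType) (P : pred T) (i : T) (C : {set T}) :
  [exists k in i |: C, P k] = P i || [exists k in C, P k].
Proof.
apply/existsP/orP => [[k]|[Pi|/existsP[k /andP[kC Pk]]]].
- rewrite !inE => /andP[/orP[/eqP-> //|kC] Pk]; first by left.
  by right; apply/existsP; exists k; rewrite kC.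
- by exists i; rewrite setU11.
- by exists k; rewrite inE kC orbT.
Qed.

Lemma equal_split (R : numFieldType) (I : finType) (f : I -> R) (A : {set I}) i :
  i \in A -> (forall j, j \notin A -> f j = 0) -> (forall j, j \in A -> f j = f i) ->
  f i = (\sum_j f j) / #|A|%:R.
Proof.
move=> iA f_out f_in.
rewrite (bigID (mem A)) /= [X in _ + X]big1 ?addr0 //.
rewrite (eq_bigr (fun _ => f i)) // sumr_const -[f i *+ _]mulr_natr mulfK //.
by rewrite pnatr_eq0 -lt0n card_gt0; apply/set0Pn; exists i.
Qed.

Section PhyloGames.
Variables (R : numFieldType) (n : nat) (V : finType) (rho : V) (par : V -> V)
  (leaf : 'I_n -> V).
Local Notation PDT := (PD rho par leaf).
Local Notation anc := (anc par).

Lemma PD_ext (l1 l2 : V -> R) : l1 =1 l2 -> PDT l1 = PDT l2.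
Proof. by move=> e; apply/ffunP=> S; rewrite !ffunE; apply: eq_bigr => v _. Qed.

Lemma PD_add (l1 l2 : V -> R) :
  PDT (fun v => l1 v + l2 v) = [ffun S => PDT l1 S + PDT l2 S].
Proof. by apply/ffunP=> S; rewrite !ffunE big_split. Qed.

Lemma PD_set0 (l : V -> R) : PDT l set0 = 0.
Proof. by rewrite ffunE big1 // => v /andP[_ /existsP[i]]; rewrite inE. Qed.

Definition edge_len (l : V -> R) (v : V) : V -> R :=
  fun w => if w == v then l v else 0.

Lemma edge_len_sum (l : V -> R) : l =1 (fun w => \sum_v edge_len l v w).
Proof. by move=> w; rewrite -big_mkcond (big_pred1 w) // => v; rewrite eq_sym. Qed.

Lemma edge_len_nonneg (l : V -> R) v :
  nonneg_len rho l -> nonneg_len rho (edge_len l v).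
Proof.
by move=> l_ge0 w w_rho; rewrite /edge_len; case: eqP => [<-|//]; exact: l_ge0.
Qed.

Lemma PD_edge (l : V -> R) v S : PDT (edge_len l v) S =
  if (v != rho) && [exists k in S, anc (leaf k) v] then l v else 0.
Proof.
rewrite ffunE; case: ifP => [Pv|nPv].
  rewrite (bigD1 v) //= big1 ?addr0 => [|w /andP[_ /negPf w_v]].
    by rewrite /edge_len eqxx.
  by rewrite /edge_len w_v.
by apply: big1 => w Pw; rewrite /edge_len; case: eqP => // wv; rewrite -wv Pw in nPv.
Qed.

Lemma PD_edge_dummy (l : V -> R) v i : ~~ ((v != rho) && anc (leaf i) v) ->
  forall C, PDT (edge_len l v) (i |: C) = PDT (edge_len l v) C.
Proof.
move=> not_below C; rewrite !PD_edge existsU1.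
by case: (v != rho) not_below => //= /negPf->.
Qed.

Lemma PD_edge_sym (l : V -> R) v i j : anc (leaf i) v -> anc (leaf j) v ->
  forall C, PDT (edge_len l v) (i |: C) = PDT (edge_len l v) (j |: C).
Proof. by move=> ai aj C; rewrite !PD_edge !existsU1 ai aj. Qed.

Section Value.
Variable psi : game R n -> 'I_n -> R.
Hypothesis psi_ax : value_axioms rho par leaf psi.

Lemma value_edge (l : V -> R) v i : nonneg_len rho l ->
  psi (PDT (edge_len l v)) i =
  if (v != rho) && anc (leaf i) v then l v / (n_e par leaf v)%:R else 0.
Proof.
case: psi_ax => eff symm dummy _ l_ge0.
have le_ge0 := edge_len_nonneg v l_ge0.
case: ifP => [/andP[v_rho ai]|not_below].
  rewrite (@equal_split _ _ _ [set k | anc (leaf k) v] i) ?inE //.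
  - by rewrite eff // PD_edge v_rho; case: existsP => // -[]; exists i; rewrite in_setT.
  - move=> j; rewrite inE => aj; apply: dummy => // C _.
    by apply: PD_edge_dummy; rewrite (negPf aj) andbF.
  - move=> j; rewrite inE => aj; have [->//|ji] := eqVneq j i.
    by apply: symm => // C _ _; apply: PD_edge_sym.
by apply: dummy => // C _; apply: PD_edge_dummy; rewrite not_below.
Qed.

(* Additivity (and dummy, for the zero game) extends to finite sums of
   games in G_T. *)
Lemma value_sum (I : Type) (s : seq I) (f : I -> V -> R) i :
  (forall k, nonneg_len rho (f k)) ->
  psi (PDT (fun w => \sum_(k <- s) f k w)) i = \sum_(k <- s) psi (PDT (f k)) i.
Proof.
case: psi_ax => _ _ dummy add f_ge0.
have sum_ge0 t : nonneg_len rho (fun w => \sum_(k <- t) f k w).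
  by move=> w w_rho; apply: sumr_ge0 => k _; exact: f_ge0.
elim: s => [|k s IHs].
  rewrite big_nil; apply: dummy => [w _|C _]; first by rewrite big_nil.
  by rewrite !ffunE !big1 // => w _; rewrite big_nil.
rewrite big_cons -IHs -add //; congr (psi _ i).
by rewrite -PD_add; apply: PD_ext => w; rewrite big_cons.
Qed.

Lemma value_FP (l : V -> R) :
  nonneg_len rho l -> forall i, psi (PDT l) i = FP rho par leaf l i.
Proof.
move=> l_ge0 i; rewrite (PD_ext (edge_len_sum l)) value_sum.
  by rewrite /FP [RHS]big_mkcond; apply: eq_bigr => v _; rewrite value_edge.
by move=> v; exact: edge_len_nonneg.
Qed.
End Value.

Lemma shapley_value_axioms : value_axioms rho par leaf (@shapley R n).
Proof.
split=> [l _ | l _ i j _ | l _ i | l1 l2 _ _ i].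
- by rewrite shapley_eff PD_set0 subr0.
- exact: shapley_sym.
- exact: shapley_dummy.
- exact: shapley_add.
Qed.

Lemma value_axioms_ext (phi psi : game R n -> 'I_n -> R) :
  value_axioms rho par leaf phi ->
  (forall l, nonneg_len rho l -> forall i, psi (PDT l) i = phi (PDT l) i) ->
  value_axioms rho par leaf psi.
Proof.
case=> eff symm dummy add psi_phi; split.
- by move=> l l_ge0; rewrite (eq_bigr _ (fun i _ => psi_phi l l_ge0 i)); exact: eff.
- by move=> l l_ge0 i j ij sym_ij; rewrite !psi_phi //; exact: symm.
- by move=> l l_ge0 i dummy_i; rewrite psi_phi //; exact: dummy.
- move=> l1 l2 l1_ge0 l2_ge0 i.
  have l12_ge0 : nonneg_len rho (fun v => l1 v + l2 v).
    by move=> v v_rho; rewrite addr_ge0 ?l1_ge0 ?l2_ge0.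
  by rewrite -PD_add psi_phi // PD_add add // !psi_phi.
Qed.
End PhyloGames.

Unset Implicit Arguments.
Theorem theorem7 (R : realFieldType) (n : nat) (V : finType) (rho : V)
    (par : V -> V) (leaf : 'I_n -> V) :
  is_rooted_phylo rho par leaf ->
  (forall psi : game R n -> 'I_n -> R,
     value_axioms rho par leaf psi <->
     (forall l : V -> R, nonneg_len rho l -> forall i : 'I_n,
        psi (PD rho par leaf l) i = shapley (PD rho par leaf l) i))
  /\
  (forall l : V -> R, nonneg_len rho l -> forall i : 'I_n,
     shapley (PD rho par leaf l) i = FP rho par leaf l i).
Proof.
move=> _; have shapley_ax := @shapley_value_axioms R n V rho par leaf.
split=> [psi|]; last exact: value_FP shapley_ax.
split=> [psi_ax l l_ge0 i | psi_shapley]; last exact: value_axioms_ext shapley_ax _.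
by rewrite (value_FP psi_ax) // (value_FP shapley_ax).
Qed.
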